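(* Let $\mathcal{C}$ be a category with finite limits and $N,M$ classes of morphisms in $\mathcal{C}$. Assume $N \perp M$. Then $Lw^{\cong}(N) \perp Sp^{\cong}(M)$ in $\overline{\mathrm{Pro}}(\mathcal{C})$.
   Context: $\overline{\mathrm{Pro}}(\mathcal{C})$ has objects diagrams $F:A\to\mathcal{C}$ with $A$ a cofinite directed poset of infinite height (poset as category with $u\to v$ iff $u\ge v$), and morphisms $F^A\to G^B$ the classes $[\alpha,\phi]$ of pairs with $\alpha:B\to A$ strictly increasing and $\phi:F\circ\alpha\to G$ natural, identified along chains of relations $(\alpha',\phi')\ge(\alpha,\phi)$; it is equivalent to $\mathrm{Pro}(\mathcal{C})$. $Lw^{\cong}(N)$: morphisms isomorphic to $[id,\phi]$ with $\phi$ a natural transformation levelwise in $N$. $Sp^{\cong}(M)$: morphisms isomorphic to $[id,\phi]$ with $\phi:X\to Y$ such that $X_t\to Y_t\times_{\lim_{s<t}Y_s}\lim_{s<t}X_s$ is in $M$ for every $t$. $K\perp L$ means every morphism in $K$ has the left lifting property with respect to every morphism in $L$. *)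

From Stdlib Require Import Relations Classical List.

Set Implicit Arguments.
Unset Strict Implicit.

Record Category := {
  Ob :> Type;
  Hom : Ob -> Ob -> Type;
  idm : forall x, Hom x x;
  comp : forall x y z, Hom y z -> Hom x y -> Hom x z;
  comp_id_l : forall x y (f : Hom x y), comp (idm y) f = f;
  comp_id_r : forall x y (f : Hom x y), comp f (idm x) = f;
  comp_assoc : forall w x y z (h : Hom y z) (g : Hom x y) (f : Hom w x),
      comp h (comp g f) = comp (comp h g) f }.
Arguments Hom {c} _ _.
Arguments idm {c} x.
Arguments comp {c x y z} _ _.
Arguments comp_id_l {c x y} f.
Arguments comp_id_r {c x y} f.
Arguments comp_assoc {c w x y z} h g f.

Definition MorClass (C : Category) := forall x y : Ob C, @Hom C x y -> Prop.

Definition perp (C : Category) (K L : MorClass C) : Prop :=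
  forall (a b : Ob C) (i : Hom a b) (x y : Ob C) (p : Hom x y),
    K a b i -> L x y p ->
    forall (u : Hom a x) (v : Hom b y), comp p u = comp v i ->
      exists h : Hom b x, comp h i = u /\ comp p h = v.

Record Functor (J C : Category) := {
  fob : Ob J -> Ob C;
  fmap : forall x y : Ob J, Hom x y -> Hom (fob x) (fob y);
  fmap_id : forall x, fmap (idm x) = idm (fob x);
  fmap_comp : forall x y z (g : Hom y z) (f : Hom x y),
      fmap (comp g f) = comp (fmap g) (fmap f) }.
Arguments fob {J C} _ _.
Arguments fmap {J C} _ {x y} _.

Definition FiniteT (T : Type) : Prop := exists l : list T, forall x, In x l.

Definition FiniteCat (J : Category) : Prop :=
  FiniteT (Ob J) /\ forall x y : Ob J, FiniteT (Hom x y).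

Definition is_limit (J C : Category) (D : Functor J C) (L : Ob C)
    (pi : forall j, Hom L (fob D j)) : Prop :=
  (forall i j (f : Hom i j), comp (fmap D f) (pi i) = pi j) /\
  (forall (L' : Ob C) (pi' : forall j, Hom L' (fob D j)),
     (forall i j (f : Hom i j), comp (fmap D f) (pi' i) = pi' j) ->
     exists! u : Hom L' L, forall j, comp (pi j) u = pi' j).

Definition has_finite_limits (C : Category) : Prop :=
  forall J : Category, FiniteCat J -> forall D : Functor J C,
    exists (L : Ob C) (pi : forall j, Hom L (fob D j)), @is_limit J C D L pi.

Record CDPoset := {
  pt :> Type;
  ple : pt -> pt -> Prop;
  ple_refl : forall a, ple a a;
  ple_antisym : forall a b, ple a b -> ple b a -> a = b;
  ple_trans : forall a b c, ple a b -> ple b c -> ple a c;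
  pdir_ne : inhabited pt;
  pdir_ub : forall a b, exists c, ple a c /\ ple b c;
  pcofinite : forall t, exists l : list pt, forall s, ple s t -> s <> t -> In s l;
  pinf_height : forall n : nat, exists c : nat -> pt,
      forall i, i < n -> ple (c i) (c (S i)) /\ c i <> c (S i) }.
Arguments ple {c0} _ _ : rename.
Arguments ple_refl {c0} a : rename.

Definition plt (A : CDPoset) (s t : A) : Prop := ple s t /\ s <> t.

(* A diagram F : A -> C, where u -> v iff u >= v. *)
Record Diagram (C : Category) (A : CDPoset) := {
  dob :> A -> Ob C;
  dmap : forall u v : A, ple v u -> Hom (dob u) (dob v);
  dmap_id : forall u (p : ple u u), dmap p = idm (dob u);
  dmap_comp : forall u v w (p : ple v u) (q : ple w v) (r : ple w u),
      comp (dmap q) (dmap p) = dmap r }.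
Arguments dmap {C A} _ {u v} _.

Lemma dmap_irr (C : Category) (A : CDPoset) (F : Diagram C A) (u v : A)
  (p q : ple v u) : dmap F p = dmap F q.
Proof.
  rewrite <- (comp_id_l (dmap F p)).
  rewrite <- (dmap_id F (ple_refl v)).
  apply dmap_comp.
Qed.

Definition strictly_increasing (A B : CDPoset) (alpha : B -> A) : Prop :=
  forall s t : B, plt s t -> plt (alpha s) (alpha t).

Lemma sinc_mono (A B : CDPoset) (alpha : B -> A) :
  strictly_increasing alpha -> forall s t : B, ple s t -> ple (alpha s) (alpha t).
Proof.
  intros H s t p. destruct (classic (s = t)) as [e|ne].
  - subst. apply ple_refl.
  - apply (H s t (conj p ne)).
Qed.

Record PMor (C : Category) (A B : CDPoset) (F : Diagram C A) (G : Diagram C B) := {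
  alpha : B -> A;
  alpha_sinc : strictly_increasing alpha;
  phi : forall b : B, Hom (F (alpha b)) (G b);
  phi_nat : forall (b b' : B) (p : ple b' b) (q : ple (alpha b') (alpha b)),
      comp (dmap G p) (phi b) = comp (phi b') (dmap F q) }.
Arguments alpha {C A B F G} _ _.
Arguments phi {C A B F G} _ _.
Arguments phi_nat {C A B F G} _ {b b'} p q.
Arguments alpha_sinc {C A B F G} _ _ _ _.

Definition pm_ge (C : Category) (A B : CDPoset) (F : Diagram C A) (G : Diagram C B)
    (f' f : PMor F G) : Prop :=
  forall b : B, exists p : ple (alpha f b) (alpha f' b),
    phi f' b = comp (phi f b) (dmap F p).

(* Two representatives define the same morphism of \bar{Pro}(C) iff they are
   connected by a chain of such relations. *)
Definition pm_eq (C : Category) (A B : CDPoset) (F : Diagram C A) (G : Diagram C B) :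
    PMor F G -> PMor F G -> Prop :=
  clos_refl_sym_trans _ (@pm_ge C A B F G).

Definition pm_id (C : Category) (A : CDPoset) (F : Diagram C A) : PMor F F.
Proof.
  refine {| alpha := fun a => a; phi := fun a => idm (F a) |}.
  - intros s t h; exact h.
  - intros b b' p q. rewrite comp_id_l, comp_id_r. apply dmap_irr.
Defined.

(* composite: first f : F -> G, then g : G -> H *)
Definition pm_comp (C : Category) (A B D : CDPoset) (F : Diagram C A)
    (G : Diagram C B) (H : Diagram C D) (f : PMor F G) (g : PMor G H) : PMor F H.
Proof.
  refine {| alpha := fun d => alpha f (alpha g d);
            phi := fun d => comp (phi g d) (phi f (alpha g d)) |}.
  - intros s t h. apply (alpha_sinc f). apply (alpha_sinc g). exact h.
  - intros d d' p q.
    assert (r : ple (alpha g d') (alpha g d)) by (apply sinc_mono; [apply alpha_sinc | exact p]).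
    rewrite comp_assoc, (phi_nat g p r), <- !comp_assoc, (phi_nat f r q).
    reflexivity.
Defined.

Definition pm_iso (C : Category) (A B : CDPoset) (F : Diagram C A) (G : Diagram C B)
    (f : PMor F G) : Prop :=
  exists g : PMor G F, pm_eq (pm_comp f g) (pm_id F) /\ pm_eq (pm_comp g f) (pm_id G).

Definition arrow_iso (C : Category) (A B A' B' : CDPoset)
    (F : Diagram C A) (G : Diagram C B) (F' : Diagram C A') (G' : Diagram C B')
    (f : PMor F G) (f' : PMor F' G') : Prop :=
  exists (i : PMor F F') (j : PMor G G'),
    pm_iso i /\ pm_iso j /\ pm_eq (pm_comp f j) (pm_comp i f').

Definition nat_level (C : Category) (A : CDPoset) (X Y : Diagram C A)
    (phi0 : forall a : A, Hom (X a) (Y a)) : Prop :=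
  forall (u v : A) (p : ple v u), comp (dmap Y p) (phi0 u) = comp (phi0 v) (dmap X p).

Definition level_pm (C : Category) (A : CDPoset) (X Y : Diagram C A)
    (phi0 : forall a : A, Hom (X a) (Y a)) (Hn : nat_level phi0) : PMor X Y.
Proof.
  refine {| alpha := fun a => a; phi := phi0 |}.
  - intros s t h; exact h.
  - intros b b' p q. rewrite (Hn b b' p). f_equal. apply dmap_irr.
Defined.

Definition Lw (C : Category) (N : MorClass C) (A B : CDPoset)
    (F : Diagram C A) (G : Diagram C B) (f : PMor F G) : Prop :=
  exists (A' : CDPoset) (X Y : Diagram C A') (phi0 : forall a : A', Hom (X a) (Y a))
         (Hn : nat_level phi0),
    (forall a, N _ _ (phi0 a)) /\ arrow_iso f (level_pm Hn).

Definition is_sublim (C : Category) (A : CDPoset) (X : Diagram C A) (t : A)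
    (L : Ob C) (pi : forall s : A, plt s t -> Hom L (X s)) : Prop :=
  (forall s s' (hs : plt s t) (hs' : plt s' t) (p : ple s' s),
      comp (dmap X p) (pi s hs) = pi s' hs') /\
  (forall (L' : Ob C) (pi' : forall s : A, plt s t -> Hom L' (X s)),
     (forall s s' (hs : plt s t) (hs' : plt s' t) (p : ple s' s),
         comp (dmap X p) (pi' s hs) = pi' s' hs') ->
     exists! u : Hom L' L, forall s hs, comp (pi s hs) u = pi' s hs).
Arguments is_sublim {C A} X t L pi.

Definition is_pullback (C : Category) (x y z : Ob C) (f : Hom x z) (g : Hom y z)
    (P : Ob C) (p1 : Hom P x) (p2 : Hom P y) : Prop :=
  comp f p1 = comp g p2 /\
  forall (Q : Ob C) (q1 : Hom Q x) (q2 : Hom Q y), comp f q1 = comp g q2 ->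
    exists! u : Hom Q P, comp p1 u = q1 /\ comp p2 u = q2.
Arguments is_pullback {C x y z} f g P p1 p2.

(* phi : X -> Y is "special" w.r.t. M: for every t the relative matching map
   X_t -> Y_t x_{lim_{s<t} Y_s} lim_{s<t} X_s is in M. *)
Definition special (C : Category) (M : MorClass C) (A : CDPoset) (X Y : Diagram C A)
    (phi0 : forall a : A, Hom (X a) (Y a)) : Prop :=
  forall t : A,
  exists (LX : Ob C) (piX : forall s, plt s t -> Hom LX (X s))
         (LY : Ob C) (piY : forall s, plt s t -> Hom LY (Y s))
         (a : Hom (Y t) LY) (c : Hom LX LY) (d : Hom (X t) LX)
         (P : Ob C) (p1 : Hom P (Y t)) (p2 : Hom P LX) (k : Hom (X t) P),
    is_sublim X t LX piX /\ is_sublim Y t LY piY /\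
    (forall s (hs : plt s t), comp (piY s hs) a = dmap Y (proj1 hs)) /\
    (forall s (hs : plt s t), comp (piY s hs) c = comp (phi0 s) (piX s hs)) /\
    (forall s (hs : plt s t), comp (piX s hs) d = dmap X (proj1 hs)) /\
    is_pullback a c P p1 p2 /\
    comp p1 k = phi0 t /\ comp p2 k = d /\
    M _ _ k.

Definition Sp (C : Category) (M : MorClass C) (A B : CDPoset)
    (F : Diagram C A) (G : Diagram C B) (f : PMor F G) : Prop :=
  exists (A' : CDPoset) (X Y : Diagram C A') (phi0 : forall a : A', Hom (X a) (Y a))
         (Hn : nat_level phi0),
    special M phi0 /\ arrow_iso f (level_pm Hn).

Definition pro_lifts (C : Category) (A B A' B' : CDPoset)
    (F : Diagram C A) (G : Diagram C B) (X : Diagram C A') (Y : Diagram C B')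
    (f : PMor F G) (g : PMor X Y) : Prop :=
  forall (u : PMor F X) (v : PMor G Y),
    pm_eq (pm_comp u g) (pm_comp f v) ->
    exists h : PMor G X, pm_eq (pm_comp f h) u /\ pm_eq (pm_comp h g) v.

Definition ProMorClass (C : Category) :=
  forall (A B : CDPoset) (F : Diagram C A) (G : Diagram C B), PMor F G -> Prop.

Definition pro_perp (C : Category) (K L : ProMorClass C) : Prop :=
  forall (A B A' B' : CDPoset) (F : Diagram C A) (G : Diagram C B)
         (X : Diagram C A') (Y : Diagram C B') (f : PMor F G) (g : PMor X Y),
    K A B F G f -> L A' B' X Y g -> pro_lifts f g.

(* Both classes are closed under isomorphism of arrows, so it suffices to lift
   a levelwise N-map [i : X => Y] against a special M-map [p : Z => W] in an
   eventually commuting square [u, v].  The lift [Y -> Z] is built by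
   well-founded recursion on the cofinite index poset of [Z]: at level [t],
   choose an index [a] strictly above all indices used below [t]; the lifts
   already built form a cone from [Y a] to lim_{s<t} Z_s, which together with
   [v_t] maps [Y a] into the pullback W_t x_{lim_{s<t} W_s} lim_{s<t} Z_s, and
   lifting [i a] against the M-map from [Z t] into that pullback gives the
   value at [t]. *)

From Stdlib Require Import Relations Classical ClassicalEpsilon FunctionalExtensionality List FinFun Arith Lia Morphisms.

Section CofiniteDirectedPosets.
Context {A : CDPoset}.

Lemma plt_trans {a b c : A} : plt a b -> plt b c -> plt a c.
Proof.
  intros [hab nab] [hbc nbc]. split; [eapply ple_trans; eauto|].
  intros ->. apply nab, ple_antisym; auto.
Qed.

Lemma ple_plt_trans {a b c : A} : ple a b -> plt b c -> plt a c.
Proof.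
  intros hab [hbc nbc]. split; [eapply ple_trans; eauto|].
  intros ->. apply nbc, ple_antisym; auto.
Qed.

Lemma chain_plt (c : nat -> A) {n : nat}
  (Hc : forall i, i < n -> ple (c i) (c (S i)) /\ c i <> c (S i)) {i j : nat} :
  i < j -> j <= n -> plt (c i) (c j).
Proof.
  intros hij. induction hij as [|j hij IH]; intros hjn.
  - apply Hc. lia.
  - eapply plt_trans; [apply IH; lia | apply Hc; lia].
Qed.

(* A maximal element [b] would lie above everything, so a chain of length
   exceeding the number of strict predecessors of [b] could not be injective. *)
Lemma exists_plt_above (b : A) : exists a, plt b a.
Proof.
  apply NNPP. intros Hno.
  assert (Hmax : forall x, ple x b).
  { intros x. destruct (pdir_ub x b) as [c [hxc hbc]].
    destruct (classic (b = c)) as [->|nbc]; auto.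
    exfalso. apply Hno. exists c. split; auto. }
  destruct (pcofinite b) as [l Hl].
  destruct (pinf_height A (S (length l))) as [c Hc].
  set (chain := map c (seq 0 (S (S (length l))))).
  assert (Hincl : incl chain (b :: l)).
  { intros y Hy. apply in_map_iff in Hy as [i [<- _]].
    destruct (classic (c i = b)) as [->|ne]; [left; auto | right; auto]. }
  assert (Hnodup : NoDup chain).
  { apply Injective_map_NoDup_in; [|apply seq_NoDup].
    intros i j Hi Hj e. apply in_seq in Hi, Hj.
    destruct (Nat.lt_trichotomy i j) as [h|[h|h]]; auto; exfalso;
      apply (proj2 (chain_plt c Hc h ltac:(lia))); auto. }
  pose proof (NoDup_incl_length Hnodup Hincl) as Hlen.
  unfold chain in Hlen. rewrite length_map, length_seq in Hlen. simpl in Hlen. lia.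
Qed.

Lemma exists_ple_ub_list (c : A) (l : list A) :
  exists a, ple c a /\ forall y, In y l -> ple y a.
Proof.
  induction l as [|y l [a [hca Hl]]].
  - exists c. split; [apply ple_refl | intros y []].
  - destruct (pdir_ub a y) as [b [hab hyb]].
    exists b. split; [eapply ple_trans; eauto|].
    intros z [<-|hz]; [auto | eapply ple_trans; eauto].
Qed.

Lemma exists_plt_ub_list (c : A) (l : list A) :
  exists a, ple c a /\ forall y, In y l -> plt y a.
Proof.
  destruct (exists_ple_ub_list c l) as [b [hcb Hl]].
  destruct (exists_plt_above b) as [a hba].
  exists a. split; [eapply ple_trans; [exact hcb | apply hba]|].
  intros y hy. eapply ple_plt_trans; eauto.
Qed.

Definition pt_eq_dec (x y : A) : {x = y} + {x <> y} := excluded_middle_informative (x = y).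

Lemma plt_wf : well_founded (@plt A).
Proof.
  assert (Hacc : forall n (t : A) l,
             (forall s, plt s t -> In s l) -> length l <= n -> Acc (@plt A) t).
  { induction n as [|n IH]; intros t l Hl Hlen; constructor; intros s hst.
    - apply Hl in hst. destruct l; simpl in *; [contradiction | lia].
    - apply (IH s (remove pt_eq_dec s l)).
      + intros r hrs. apply in_in_remove; [apply hrs | apply Hl, (plt_trans hrs hst)].
      + pose proof (remove_length_lt pt_eq_dec l s (Hl s hst)). lia. }
  intros t. destruct (pcofinite t) as [l Hl].
  apply (Hacc (length l) t l); auto. intros s [hst nst]. auto.
Qed.
End CofiniteDirectedPosets.

Lemma exists_plt_ub_below {A B : CDPoset} {t : B} (f : forall s, plt s t -> A) (c : A) :
  exists a, ple c a /\ forall s (hst : plt s t), plt (f s hst) a.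
Proof.
  destruct (pcofinite t) as [l Hl].
  set (g := fun s => match excluded_middle_informative (plt s t) with
                     | left hst => f s hst | right _ => c end).
  destruct (exists_plt_ub_list c (map g l)) as [a [hca Ha]].
  exists a. split; auto. intros s hst.
  replace (f s hst) with (g s).
  - apply Ha, in_map, Hl; apply hst.
  - unfold g. destruct excluded_middle_informative as [h|n]; [|contradiction].
    rewrite (proof_irrelevance _ h hst). reflexivity.
Qed.

Section ProMorphisms.
Context {C : Category}.

Global Instance pm_eq_equiv (A B : CDPoset) (F : Diagram C A) (G : Diagram C B) :
  Equivalence (@pm_eq C A B F G).
Proof.
  split.
  - intros f. apply rst_refl.
  - intros f g h. apply rst_sym, h.
  - intros f g h hfg hgh. eapply rst_trans; eauto.
Qed.

Context {A B D E : CDPoset} {F : Diagram C A} {G : Diagram C B} {H : Diagram C D}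
  {K : Diagram C E}.

Lemma pm_ge_comp_l (f f' : PMor F G) (g : PMor G H) :
  pm_ge f' f -> pm_ge (pm_comp f' g) (pm_comp f g).
Proof.
  intros Hf d. destruct (Hf (alpha g d)) as [hle e]. exists hle. simpl.
  rewrite e, comp_assoc. reflexivity.
Qed.

Lemma pm_ge_comp_r (f : PMor F G) (g g' : PMor G H) :
  pm_ge g' g -> pm_ge (pm_comp f g') (pm_comp f g).
Proof.
  intros Hg d. destruct (Hg d) as [hle e].
  assert (hle' : ple (alpha f (alpha g d)) (alpha f (alpha g' d)))
    by (apply sinc_mono; [apply alpha_sinc | exact hle]).
  exists hle'. simpl. rewrite e, <- comp_assoc, (phi_nat f hle hle'), comp_assoc.
  reflexivity.
Qed.

Global Instance pm_comp_proper :
  Proper (@pm_eq C A B F G ==> @pm_eq C B D G H ==> @pm_eq C A D F H) (@pm_comp C A B D F G H).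
Proof.
  intros f f' Hf g g' Hg. transitivity (pm_comp f' g).
  - induction Hf; [apply rst_step, pm_ge_comp_l; auto | reflexivity | symmetry; auto
                  | etransitivity; eauto].
  - induction Hg; [apply rst_step, pm_ge_comp_r; auto | reflexivity | symmetry; auto
                  | etransitivity; eauto].
Qed.

Lemma pm_compA (f : PMor F G) (g : PMor G H) (h : PMor H K) :
  pm_eq (pm_comp (pm_comp f g) h) (pm_comp f (pm_comp g h)).
Proof.
  apply rst_step. intros e. exists (ple_refl _). simpl.
  rewrite dmap_id, comp_id_r, comp_assoc. reflexivity.
Qed.

Lemma pm_comp_id_l (f : PMor F G) : pm_eq (pm_comp (pm_id F) f) f.
Proof.
  apply rst_step. intros b. exists (ple_refl _). simpl.
  rewrite dmap_id, !comp_id_r. reflexivity.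
Qed.

Lemma pm_comp_id_r (f : PMor F G) : pm_eq (pm_comp f (pm_id G)) f.
Proof.
  apply rst_step. intros b. exists (ple_refl _). simpl.
  rewrite dmap_id, comp_id_r, comp_id_l. reflexivity.
Qed.
End ProMorphisms.

Lemma arrow_iso_inv_square {C : Category} {A B A' B' : CDPoset}
  {F : Diagram C A} {G : Diagram C B} {F' : Diagram C A'} {G' : Diagram C B'}
  {f : PMor F G} {f' : PMor F' G'} {i : PMor F F'} {i' : PMor F' F}
  {j : PMor G G'} {j' : PMor G' G} :
  pm_eq (pm_comp i' i) (pm_id F') ->
  pm_eq (pm_comp j j') (pm_id G) ->
  pm_eq (pm_comp f j) (pm_comp i f') -> pm_eq (pm_comp i' f) (pm_comp f' j').
Proof.
  intros Hi'i Hjj' Hsq.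
  rewrite <- (pm_comp_id_r (pm_comp i' f)), <- Hjj', <- pm_compA, (pm_compA i' f j), Hsq.
  rewrite <- pm_compA, Hi'i, pm_comp_id_l. reflexivity.
Qed.

Section TransportLifts.
Context {C : Category} {A B A' B' A2 B2 : CDPoset}
  {F : Diagram C A} {G : Diagram C B} {F' : Diagram C A'} {G' : Diagram C B'}
  {P : Diagram C A2} {Q : Diagram C B2}.

Lemma pro_lifts_arrow_iso_l {f : PMor F G} {f' : PMor F' G'} {g : PMor P Q} :
  arrow_iso f f' -> pro_lifts f' g -> pro_lifts f g.
Proof.
  intros [i [j [[i' [Hii' Hi'i]] [[j' [Hjj' _]] Hsq]]]] Hlift u v Huv.
  destruct (Hlift (pm_comp i' u) (pm_comp j' v)) as [h [Hfh Hhg]].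
  - rewrite pm_compA, Huv, <- pm_compA, (arrow_iso_inv_square Hi'i Hjj' Hsq), pm_compA.
    reflexivity.
  - exists (pm_comp j h). split.
    + rewrite <- pm_compA, Hsq, pm_compA, Hfh, <- pm_compA, Hii', pm_comp_id_l. reflexivity.
    + rewrite pm_compA, Hhg, <- pm_compA, Hjj', pm_comp_id_l. reflexivity.
Qed.

Lemma pro_lifts_arrow_iso_r {f : PMor P Q} {g : PMor F G} {g' : PMor F' G'} :
  arrow_iso g g' -> pro_lifts f g' -> pro_lifts f g.
Proof.
  intros [i [j [[i' [Hii' Hi'i]] [[j' [Hjj' _]] Hsq]]]] Hlift u v Huv.
  destruct (Hlift (pm_comp u i) (pm_comp v j)) as [h [Hfh Hhg]].
  - rewrite pm_compA, <- Hsq, <- pm_compA, Huv, pm_compA. reflexivity.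
  - exists (pm_comp h i'). split.
    + rewrite <- pm_compA, Hfh, pm_compA, Hii', pm_comp_id_r. reflexivity.
    + rewrite pm_compA, (arrow_iso_inv_square Hi'i Hjj' Hsq), <- pm_compA, Hhg, pm_compA,
        Hjj', pm_comp_id_r. reflexivity.
Qed.
End TransportLifts.

Definition eventually_eq {C : Category} {A B : CDPoset} {F : Diagram C A}
  {G : Diagram C B} (f g : PMor F G) : Prop :=
  forall b, exists c (hf : ple (alpha f b) c) (hg : ple (alpha g b) c),
    comp (phi f b) (dmap F hf) = comp (phi g b) (dmap F hg).

Lemma pm_eq_eventually_eq {C : Category} {A B : CDPoset} {F : Diagram C A}
  {G : Diagram C B} {f g : PMor F G} : pm_eq f g -> eventually_eq f g.
Proof.
  induction 1 as [f g Hge|f|f g _ IH|f g h _ IH1 _ IH2]; intros b.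
  - destruct (Hge b) as [hle e]. exists (alpha f b), (ple_refl _), hle.
    rewrite e, dmap_id, comp_id_r. reflexivity.
  - exists (alpha f b), (ple_refl _), (ple_refl _). reflexivity.
  - destruct (IH b) as [c [hg [hf e]]]. exists c, hf, hg. auto.
  - destruct (IH1 b) as [c1 [hf1 [hg1 e1]]], (IH2 b) as [c2 [hg2 [hh2 e2]]].
    destruct (pdir_ub c1 c2) as [d [hc1 hc2]].
    exists d, (ple_trans hf1 hc1), (ple_trans hh2 hc2).
    rewrite <- (dmap_comp F hc1 hf1), <- (dmap_comp F hc2 hh2), !comp_assoc, e1, <- e2,
      <- !comp_assoc, (dmap_comp F hc1 hg1 (ple_trans hg1 hc1)),
      (dmap_comp F hc2 hg2 (ple_trans hg2 hc2)).
    f_equal. apply dmap_irr.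
Qed.

Lemma is_sublim_ext {C : Category} {A : CDPoset} {X : Diagram C A} {t : A} {L : Ob C}
  {pi : forall s : A, plt s t -> Hom L (X s)} :
  is_sublim X t L pi -> forall (Q : Ob C) (x y : Hom Q L),
  (forall s hst, comp (pi s hst) x = comp (pi s hst) y) -> x = y.
Proof.
  intros [Hcone Huniv] Q x y Hxy.
  destruct (Huniv Q (fun s hst => comp (pi s hst) x)) as [w [_ Hw]].
  - intros s s' hst hs't hle. rewrite comp_assoc, (Hcone s s' hst hs't hle). reflexivity.
  - transitivity w; [symmetry|]; apply Hw; auto.
Qed.

Lemma is_pullback_ext {C : Category} {x y z : Ob C} {f : Hom x z} {g : Hom y z} {P : Ob C}
  {p1 : Hom P x} {p2 : Hom P y} : is_pullback f g P p1 p2 ->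
  forall Q (m n : Hom Q P), comp p1 m = comp p1 n -> comp p2 m = comp p2 n -> m = n.
Proof.
  intros [Hsq Huniv] Q m n e1 e2.
  destruct (Huniv Q (comp p1 m) (comp p2 m)) as [w [_ Hw]].
  - rewrite !comp_assoc, Hsq. reflexivity.
  - transitivity w; [symmetry|]; apply Hw; auto.
Qed.

Lemma dmap_comp_trans {C : Category} {A : CDPoset} (F : Diagram C A) {u v w : A}
  (hvu : ple v u) (hwv : ple w v) :
  comp (dmap F hwv) (dmap F hvu) = dmap F (ple_trans hwv hvu).
Proof. apply dmap_comp. Qed.

Section LevelwiseLift.
Context {C : Category} {N M : MorClass C} {A B : CDPoset} {X Y : Diagram C A}
  {Z W : Diagram C B} {i : forall a, Hom (X a) (Y a)} {p : forall b, Hom (Z b) (W b)}.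
Hypothesis HNM : perp N M.
Hypotheses (Hi_nat : nat_level i) (Hi_N : forall a, N _ _ (i a)).
Hypotheses (Hp_nat : nat_level p) (Hp_special : special M p).
Variables (u : PMor X Z) (v : PMor Y W).
Hypothesis Huv : eventually_eq (pm_comp u (level_pm Hp_nat)) (pm_comp (level_pm Hi_nat) v).

Definition extension (t : B) := {a : A & Hom (Y a) (Z t)}.

Definition solves {t : B} (e : extension t) : Prop :=
  (exists hu : ple (alpha u t) (projT1 e),
      comp (projT2 e) (i (projT1 e)) = comp (phi u t) (dmap X hu)) /\
  (exists hv : ple (alpha v t) (projT1 e),
      comp (p t) (projT2 e) = comp (phi v t) (dmap Y hv)).

Definition compatible {s t : B} (hst : plt s t) (es : extension s) (et : extension t) :=
  exists hlt : plt (projT1 es) (projT1 et),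
    comp (dmap Z (proj1 hst)) (projT2 et) = comp (projT2 es) (dmap Y (proj1 hlt)).

Section Step.
Variable t : B.
Variable prev : forall s, plt s t -> extension s.
Hypothesis prev_solves : forall s hst, solves (prev s hst).
Hypothesis prev_compatible : forall s s' (hst : plt s t) (hs't : plt s' t) (hs's : plt s' s),
  compatible hs's (prev s' hs't) (prev s hst).

Variables (c : A) (hu : ple (alpha u t) c) (hv : ple (alpha v t) c).
Hypothesis Hc : comp (comp (p t) (phi u t)) (dmap X hu)
              = comp (comp (phi v t) (i (alpha v t))) (dmap X hv).
Variables (a : A) (hca : ple c a) (Ha : forall s hst, plt (projT1 (prev s hst)) a).

Variables (LZ : Ob C) (piZ : forall s, plt s t -> Hom LZ (Z s))
  (LW : Ob C) (piW : forall s, plt s t -> Hom LW (W s))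
  (mW : Hom (W t) LW) (mp : Hom LZ LW) (mZ : Hom (Z t) LZ)
  (P : Ob C) (p1 : Hom P (W t)) (p2 : Hom P LZ) (k : Hom (Z t) P).
Hypotheses (HLZ : is_sublim Z t LZ piZ) (HLW : is_sublim W t LW piW)
  (HmW : forall s hst, comp (piW s hst) mW = dmap W (proj1 hst))
  (Hmp : forall s hst, comp (piW s hst) mp = comp (p s) (piZ s hst))
  (HmZ : forall s hst, comp (piZ s hst) mZ = dmap Z (proj1 hst))
  (HP : is_pullback mW mp P p1 p2) (Hk1 : comp p1 k = p t) (Hk2 : comp p2 k = mZ)
  (HkM : M _ _ k).

Definition cone {s : B} (hst : plt s t) : Hom (Y a) (Z s) :=
  comp (projT2 (prev s hst)) (dmap Y (proj1 (Ha s hst))).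

Lemma cone_compat (s s' : B) (hst : plt s t) (hs't : plt s' t) (hs's : ple s' s) :
  comp (dmap Z hs's) (cone hst) = cone hs't.
Proof.
  destruct (classic (s' = s)) as [->|ne].
  - rewrite (proof_irrelevance _ hs't hst), dmap_id, comp_id_l. reflexivity.
  - destruct (prev_compatible _ _ hst hs't (conj hs's ne)) as [hlt E].
    unfold cone. rewrite comp_assoc, (dmap_irr Z hs's (proj1 (conj hs's ne))), E,
      <- comp_assoc, dmap_comp_trans.
    f_equal. apply dmap_irr.
Qed.

Lemma bottom_square {q2 : Hom (Y a) LZ} (Hq2 : forall s hst, comp (piZ s hst) q2 = cone hst) :
  comp mW (comp (phi v t) (dmap Y (ple_trans hv hca))) = comp mp q2.
Proof.
  apply (is_sublim_ext HLW). intros s hst.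
  destruct (prev_solves s hst) as [_ [hvs Hvs]].
  rewrite !comp_assoc, HmW, Hmp, <- (comp_assoc (p s)), Hq2,
    (phi_nat v (proj1 hst) (sinc_mono (alpha_sinc v) (proj1 hst))).
  unfold cone. rewrite comp_assoc, Hvs, <- !comp_assoc, !dmap_comp_trans.
  f_equal. apply dmap_irr.
Qed.

Lemma lifting_square {q2 : Hom (Y a) LZ} (Hq2 : forall s hst, comp (piZ s hst) q2 = cone hst)
  {bot : Hom (Y a) P} (Hb1 : comp p1 bot = comp (phi v t) (dmap Y (ple_trans hv hca)))
  (Hb2 : comp p2 bot = q2) :
  comp k (comp (phi u t) (dmap X (ple_trans hu hca))) = comp bot (i a).
Proof.
  apply (is_pullback_ext HP).
  - rewrite !comp_assoc, Hk1, Hb1, <- (comp_assoc (phi v t)), Hi_nat, comp_assoc,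
      <- !dmap_comp_trans, !comp_assoc, Hc.
    reflexivity.
  - rewrite !comp_assoc, Hk2, Hb2. apply (is_sublim_ext HLZ). intros s hst.
    destruct (prev_solves s hst) as [[hus Hus] _].
    rewrite !comp_assoc, HmZ, Hq2,
      (phi_nat u (proj1 hst) (sinc_mono (alpha_sinc u) (proj1 hst))).
    unfold cone. rewrite <- (comp_assoc (projT2 (prev s hst))), Hi_nat, comp_assoc, Hus, <- !comp_assoc,
      !dmap_comp_trans.
    f_equal. apply dmap_irr.
Qed.

Lemma extension_exists :
  exists e : extension t, solves e /\ forall s hst, compatible hst (prev s hst) e.
Proof.
  destruct (proj2 HLZ (Y a) (@cone) cone_compat) as [q2 [Hq2 _]].
  destruct (proj2 HP (Y a) _ _ (bottom_square Hq2)) as [bot [[Hb1 Hb2] _]].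
  destruct (HNM _ _ _ _ _ _ (Hi_N a) HkM _ _ (lifting_square Hq2 Hb1 Hb2)) as [h [Hh1 Hh2]].
  exists (existT _ a h). split; [split|].
  - exists (ple_trans hu hca). exact Hh1.
  - exists (ple_trans hv hca). simpl. rewrite <- Hk1, <- comp_assoc, Hh2, Hb1. reflexivity.
  - intros s hst. exists (Ha s hst). simpl.
    rewrite <- HmZ, <- Hk2, <- !comp_assoc, Hh2, Hb2, Hq2. reflexivity.
Qed.
End Step.

Lemma extension_step (t : B) (prev : forall s, plt s t -> extension s)
  (prev_solves : forall s hst, solves (prev s hst))
  (prev_compatible : forall s s' (hst : plt s t) (hs't : plt s' t) (hs's : plt s' s),
      compatible hs's (prev s' hs't) (prev s hst)) :
  exists e : extension t, solves e /\ forall s hst, compatible hst (prev s hst) e.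
Proof.
  destruct (Huv t) as [c [hu [hv Hc]]].
  destruct (exists_plt_ub_below (fun s hst => projT1 (prev s hst)) c) as [a [hca Ha]].
  destruct (Hp_special t) as [LZ [piZ [LW [piW [mW [mp [mZ [P [p1 [p2 [k
    [HLZ [HLW [HmW [Hmp [HmZ [HP [Hk1 [Hk2 HkM]]]]]]]]]]]]]]]]]]].
  eapply extension_exists; eauto.
Qed.

(* [None] marks a level where no compatible extension exists; [stages_spec]
   shows this never happens. *)
Definition stage (t : B) := option (extension t).

Definition extends {t : B} (prev : forall s, plt s t -> stage s) (e : extension t) : Prop :=
  solves e /\ forall s hst, exists es, prev s hst = Some es /\ compatible hst es e.

Definition next_stage (t : B) (prev : forall s, plt s t -> stage s) : stage t :=
  epsilon (inhabits None) (fun o => exists e, o = Some e /\ extends prev e).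

Definition stages : forall t, stage t := Fix plt_wf stage next_stage.

Lemma stages_unfold (t : B) : stages t = next_stage t (fun s _ => stages s).
Proof.
  apply Fix_eq. intros t' f g Hfg.
  replace g with f; [reflexivity|].
  apply functional_extensionality_dep. intros s.
  apply functional_extensionality_dep. intros hst. apply Hfg.
Qed.

Lemma stages_spec (t : B) : exists e, stages t = Some e /\ extends (fun s _ => stages s) e.
Proof.
  induction t as [t IH] using (well_founded_ind plt_wf).
  rewrite stages_unfold. unfold next_stage. apply epsilon_spec.
  set (prev := fun s hst => proj1_sig (constructive_indefinite_description _ (IH s hst))).
  assert (Hprev : forall s hst, stages s = Some (prev s hst)
                                /\ extends (fun s' _ => stages s') (prev s hst))
    by (intros s hst; exact (proj2_sig (constructive_indefinite_description _ (IH s hst)))).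
  destruct (extension_step t prev) as [e [He Hcompat]].
  - intros s hst. apply (Hprev s hst).
  - intros s s' hst hs't hs's.
    destruct (Hprev s hst) as [_ [_ Hcompat_s]], (Hcompat_s s' hs's) as [es' [Hes' Hc]].
    rewrite (proj1 (Hprev s' hs't)) in Hes'. injection Hes' as <-. exact Hc.
  - exists (Some e), e. split; [reflexivity|]. split; [exact He|].
    intros s hst. exists (prev s hst). split; [apply Hprev | apply Hcompat].
Qed.

Definition pmor_of_family (ext : forall t, extension t)
  (Hext : forall s t (hst : plt s t), compatible hst (ext s) (ext t)) : PMor Y Z.
Proof.
  refine {| alpha := fun t => projT1 (ext t); phi := fun t => projT2 (ext t) |}.
  - intros s t hst. exact (proj1_sig (constructive_indefinite_description _ (Hext s t hst))).
  - intros t s hst hle. destruct (classic (s = t)) as [->|ne].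
    + rewrite !dmap_id, comp_id_l, comp_id_r. reflexivity.
    + destruct (Hext s t (conj hst ne)) as [hlt E].
      rewrite (dmap_irr Z hst (proj1 (conj hst ne))), E. f_equal. apply dmap_irr.
Defined.

Lemma levelwise_lift :
  exists h : PMor Y Z, pm_eq (pm_comp (level_pm Hi_nat) h) u
                    /\ pm_eq (pm_comp h (level_pm Hp_nat)) v.
Proof.
  set (ext := fun t => proj1_sig (constructive_indefinite_description _ (stages_spec t))).
  assert (Hext : forall t, stages t = Some (ext t) /\ extends (fun s _ => stages s) (ext t))
    by (intros t; exact (proj2_sig (constructive_indefinite_description _ (stages_spec t)))).
  assert (Hcompat : forall s t (hst : plt s t), compatible hst (ext s) (ext t)).
  { intros s t hst. destruct (Hext t) as [_ [_ Hc]], (Hc s hst) as [es [Hes Hc']].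
    rewrite (proj1 (Hext s)) in Hes. injection Hes as <-. exact Hc'. }
  exists (pmor_of_family ext Hcompat). split; apply rst_step; intros t;
    destruct (Hext t) as [_ [[[hu Hu] [hv Hv]] _]]; [exists hu | exists hv]; assumption.
Qed.
End LevelwiseLift.

Lemma levelwise_pro_lifts {C : Category} {N M : MorClass C} (HNM : perp N M)
  {A B : CDPoset} {X Y : Diagram C A} {Z W : Diagram C B}
  {i : forall a, Hom (X a) (Y a)} {p : forall b, Hom (Z b) (W b)}
  (Hi_nat : nat_level i) (Hi_N : forall a, N _ _ (i a))
  (Hp_nat : nat_level p) (Hp_special : special M p) :
  pro_lifts (level_pm Hi_nat) (level_pm Hp_nat).
Proof.
  intros u v Huv.
  exact (levelwise_lift HNM Hi_nat Hi_N Hp_nat Hp_special u v (pm_eq_eventually_eq Huv)).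
Qed.

Theorem lemma4p7 (C : Category) (N M : MorClass C) :
  has_finite_limits C -> perp N M ->
  pro_perp (fun A B F G f => @Lw C N A B F G f) (fun A B F G f => @Sp C M A B F G f).
Proof.
  intros _ HNM A B A' B' F G X Y f g [A1 [X1 [Y1 [i [Hi_nat [Hi_N Hf]]]]]]
    [A2 [Z [W [p [Hp_nat [Hp_special Hg]]]]]].
  apply (pro_lifts_arrow_iso_l Hf), (pro_lifts_arrow_iso_r Hg).
  exact (levelwise_pro_lifts HNM Hi_nat Hi_N Hp_nat Hp_special).
Qed.
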